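(* Let $q$ be a prime power, let $1\le k\le m$ be integers, and let $C\subseteq \mathbb{F}_{q^m}^k$ be a non-zero $\mathbb{F}_{q^m}$-linear code of dimension $1\le t\le k$ over $\mathbb{F}_{q^m}$. For any integer $1\le r\le t$ we have $$m_r(C)=\min\{\dim_{\mathbb{F}_{q^m}}(A) : A\in \mathcal{A}^G_q(k,m),\ \dim_{\mathbb{F}_{q^m}}(A\cap C)\ge r\}.$$
   Context: For $v\in\mathbb{F}_{q^m}^k$, $\mathrm{rk}(v):=\dim_{\mathbb{F}_q}\mathrm{Span}_{\mathbb{F}_q}\{v_1,\dots,v_k\}$, and for a subspace $C$, $\mathrm{maxrk}(C):=\max\{\mathrm{rk}(c):c\in C\}$. $\mathcal{A}^G_q(k,m)$ is the set of $\mathbb{F}_{q^m}$-subspaces $A\subseteq\mathbb{F}_{q^m}^k$ with $\dim_{\mathbb{F}_{q^m}}(A)=\mathrm{maxrk}(A)$. A subspace $V\subseteq\mathbb{F}_{q^m}^k$ is Frobenius-closed if $(v_1^q,\dots,v_k^q)\in V$ whenever $v\in V$; $\Lambda_q(k,m)$ is the set of such subspaces. The $r$-th generalized rank weight is $m_r(C):=\min\{\dim_{\mathbb{F}_{q^m}}(V): V\in\Lambda_q(k,m),\ \dim_{\mathbb{F}_{q^m}}(V\cap C)\ge r\}$. *)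

From HB Require Import structures.
From mathcomp Require Import all_boot all_order all_algebra all_field.
From mathcomp Require Import boolp.
Set Implicit Arguments. Unset Strict Implicit. Unset Printing Implicit Defensive.
Import GRing.Theory.
Local Open Scope ring_scope.

(* Setting: F = F_q is a finite field (q = #|F| is a prime power),
   L = F_{q^m} is a finite-dimensional field extension of F with m = \dim {:L}. *)

Section RankMetric.
Variables (F : finFieldType) (L : fieldExtType F) (k : nat).

(* minimum of the naturals i <= k satisfying P (default k if none) *)
Definition min_upto (P : nat -> Prop) : nat :=
  \big[minn/k]_(i < k.+1 | `[< P i >]) i.

Definition rk (v : 'rV[L]_k) : nat :=
  \dim (<<[seq v ord0 i | i <- enum 'I_k]>>%VS : {vspace L}).

Definition maxrk (C : {vspace 'rV[L]_k}) : nat :=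
  \max_(i < k.+1 | `[< exists2 c, c \in C & rk c = i >]) i.

Definition in_AG (A : {vspace 'rV[L]_k}) : Prop := \dim A = maxrk A.

Definition frob (v : 'rV[L]_k) : 'rV[L]_k := map_mx (fun x => x ^+ #|F|) v.

Definition frob_closed (V : {vspace 'rV[L]_k}) : Prop :=
  forall v, v \in V -> frob v \in V.

Definition gen_rank_weight (C : {vspace 'rV[L]_k}) (r : nat) : nat :=
  min_upto (fun i => exists V : {vspace 'rV[L]_k},
     [/\ frob_closed V, (r <= \dim (V :&: C))%N & \dim V = i]).

End RankMetric.

From HB Require Import structures.
From mathcomp Require Import all_boot all_order all_algebra all_field.
From mathcomp Require Import boolp.
From mathcomp Require Import fingroup pgroup abelian.
Set Implicit Arguments. Unset Strict Implicit. Unset Printing Implicit Defensive.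
Import GRing.Theory.
Local Open Scope ring_scope.

(* Write m = dim_F L and d = dim V. If V is Frobenius-closed and w is in V,
   the d + 1 iterates w, w^q, ..., w^(q^d) are dependent in V; the dependence
   gives a nonzero q-linearized polynomial of degree at most q^d vanishing on
   the F-span of the entries of w, which has q^(rk w) elements, so
   maxrk V <= d.
   Conversely let v have maximal rank in A. When k <= m, every F-linear
   relation among the entries of v holds for every w in A: otherwise, for each
   l in L the relation space of v + l w is at least as large as that of v, so
   it contains a relation outside the relations common to v and w, and such a
   relation determines l; this injects L (q^m elements) into the nonzero
   vectors of F^k. Hence A lies in the span of the F-rational rows of
   coordinates of v on a basis of the span of its entries, a Frobenius-closed
   space of dimension rk v = maxrk A. In particular dim A <= maxrk A always,
   so Frobenius-closed spaces lie in A^G, and each A in A^G lies in a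
   Frobenius-closed space of no larger dimension. *)

Section FrobeniusPowers.
Variables (F : finFieldType) (L : fieldExtType F).
Local Notation q := #|F|.

Lemma pnat_card_pchar : [pchar L].-nat q.
Proof.
have [p pr_p pchar_p] := finPcharP F.
have /abelem_pgroup := fin_ring_pchar_abelem pchar_p.
rewrite /pgroup cardsT; apply: sub_in_pnat => n _ /=.
by rewrite (pchar_lalg L) (pcharf_eq pchar_p).
Qed.

Lemma expf_card_pow i (a : F) : a ^+ (q ^ i) = a.
Proof.
elim: i => [|i IHi]; first by rewrite expr1.
by rewrite expnSr exprM IHi expf_card.
Qed.

Lemma expr_card_pow_sum i (I : finType) (x : I -> L) :
  (\sum_j x j) ^+ (q ^ i) = \sum_j x j ^+ (q ^ i).
Proof.
apply: (big_morph (fun y : L => y ^+ (q ^ i))).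
  by move=> y z; apply: exprDn_pchar; rewrite pnatX pnat_card_pchar.
by rewrite expr0n expn_eq0 gtn_eqF // (ltnW (finNzRing_gt1 F)).
Qed.

Lemma expr_card_pow_lin i (I : finType) (a : I -> F) (x : I -> L) :
  (\sum_j a j *: x j) ^+ (q ^ i) = \sum_j a j *: x j ^+ (q ^ i).
Proof.
rewrite expr_card_pow_sum; apply: eq_bigr => j _.
by rewrite exprZn expf_card_pow.
Qed.

End FrobeniusPowers.

Section EntryRelations.
Variables (F : finFieldType) (L : fieldExtType F) (k : nat).
Implicit Types (v w : 'rV[L]_k) (x : 'rV[F]_k).

Definition entry_comb v x : L := \sum_i x ord0 i *: v ord0 i.

Lemma entry_comb_is_linear v : linear (entry_comb v).
Proof.
move=> a x y; rewrite /entry_comb scaler_sumr -big_split /=.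
by apply: eq_bigr => i _; rewrite !mxE scalerDl scalerA.
Qed.

HB.instance Definition _ v :=
  GRing.isLinear.Build F 'rV[F]_k L _ (entry_comb v) (entry_comb_is_linear v).

Definition entry_rels v : {vspace 'rV[F]_k} := lker (linfun (entry_comb v)).

Definition entry_span v : {vspace L} := <<[seq v ord0 i | i <- enum 'I_k]>>%VS.

Definition entry_tuple v : k.-tuple L := [tuple v ord0 i | i < k].

Lemma span_entry_tuple v : <<entry_tuple v>>%VS = entry_span v.
Proof. by rewrite /entry_span -val_ord_tuple. Qed.

Lemma nth_entry_tuple v (i : 'I_k) : (entry_tuple v)`_i = v ord0 i.
Proof. by rewrite -tnth_nth tnth_mktuple. Qed.

Lemma mem_entry_rels v x : (x \in entry_rels v) = (entry_comb v x == 0).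
Proof. by rewrite memv_ker lfunE. Qed.

Lemma entry_comb_row v (a : 'I_k -> F) :
  entry_comb v (\row_i a i) = \sum_i a i *: v ord0 i.
Proof. by apply: eq_bigr => i _; rewrite mxE. Qed.

Lemma entry_comb_delta v i : entry_comb v (delta_mx ord0 i) = v ord0 i.
Proof.
rewrite /entry_comb (bigD1 i) //= big1 ?addr0 => [|j /negbTE ji].
  by rewrite mxE !eqxx scale1r.
by rewrite mxE ji andbF scale0r.
Qed.

Lemma entry_comb_addZ v w (l : L) x :
  entry_comb (v + l *: w) x = entry_comb v x + l * entry_comb w x.
Proof.
rewrite /entry_comb mulr_sumr -big_split /=.
by apply: eq_bigr => i _; rewrite !mxE scalerDr scalerAr.
Qed.

Lemma mem_entry_span v i : v ord0 i \in entry_span v.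
Proof. by apply/memv_span/map_f; rewrite mem_enum. Qed.

Lemma limg_entry_comb v : limg (linfun (entry_comb v)) = entry_span v.
Proof.
apply/eqP; rewrite eqEsubv; apply/andP; split.
  apply/subvP => _ /memv_imgP[x _ ->]; rewrite lfunE.
  by apply: rpred_sum => i _; rewrite rpredZ ?mem_entry_span.
apply/span_subvP => _ /mapP[i _ ->].
by rewrite -entry_comb_delta -(lfunE (entry_comb v)) memv_img ?memvf.
Qed.

Lemma dim_entry_rels v : \dim (entry_rels v) = (k - rk v)%N.
Proof.
have := limg_ker_dim (linfun (entry_comb v)) fullv.
rewrite capfv limg_entry_comb dimvf /dim /= mul1n.
exact: canRL (addnK _).
Qed.

Lemma entry_rels_pencil v w (l1 l2 : L) x :
  x \in entry_rels (v + l1 *: w) -> x \in entry_rels (v + l2 *: w) ->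
  x \notin (entry_rels v :&: entry_rels w)%VS -> l1 = l2.
Proof.
rewrite memv_cap !mem_entry_rels !entry_comb_addZ => /eqP e1 /eqP e2.
have [w0|wn0] := eqVneq (entry_comb w x) 0.
  by move: e1; rewrite w0 mulr0 addr0 => ->; rewrite eqxx.
by move=> _; apply: (mulIf wn0); apply: (addrI (entry_comb v x)); rewrite e1 e2.
Qed.

End EntryRelations.

Section MaxRank.
Variables (F : finFieldType) (L : fieldExtType F) (k : nat).
Local Notation q := #|F|.
Implicit Types (A : {vspace 'rV[L]_k}) (v w : 'rV[L]_k).

Lemma rk_leq_k v : (rk v <= k)%N.
Proof. by apply: leq_trans (dim_span _) _; rewrite size_map size_enum_ord. Qed.

Lemma rk_le_maxrk A v : v \in A -> (rk v <= maxrk A)%N.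
Proof.
move=> vA; have rk_lt : (rk v < k.+1)%N by rewrite ltnS rk_leq_k.
apply: (leq_bigmax_cond (Ordinal rk_lt) (F := fun i : 'I_k.+1 => val i)).
by apply/asboolP; exists v.
Qed.

Lemma maxrk_attained A : exists2 v, v \in A & rk v = maxrk A.
Proof.
have rk0_lt : (rk (0 : 'rV[L]_k) < k.+1)%N by rewrite ltnS rk_leq_k.
have A_rk0 : `[< exists2 c, c \in A & rk c = Ordinal rk0_lt >].
  by apply/asboolP; exists 0; rewrite ?mem0v.
rewrite /maxrk (bigmax_eq_arg (Ordinal rk0_lt)) //.
by case: arg_maxnP => // i /asboolP.
Qed.

Lemma card_finvect : #|finvect_type L| = (q ^ \dim {:L})%N.
Proof.
by rewrite -(@card_vspacef F (finvect_type L) (Vector.class L)) card_vspace.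
Qed.

Lemma injective_row_eq0 (s : finvect_type L -> 'rV[F]_k) :
  (k <= \dim {:L})%N -> injective s -> exists l, s l = 0.
Proof.
move=> kL s_inj; apply: contrapT => no_root.
have : (#|[set s l | l : finvect_type L]| <= #|[set~ (0%R : 'rV[F]_k)]|)%N.
  apply/subset_leq_card/subsetP => _ /imsetP[l _ ->].
  by rewrite !inE; apply/eqP => sl0; apply: no_root; exists l.
rewrite card_imset // cardsC1 card_mx mul1n cardT -cardT card_finvect => le_m_k.
have : (q ^ k <= (q ^ k).-1)%N.
  by apply: leq_trans le_m_k; rewrite leq_exp2l ?finNzRing_gt1.
by rewrite leqNgt ltn_predL expn_gt0 (ltnW (finNzRing_gt1 F)).
Qed.

Lemma entry_rels_sub_maxrk A v w :
  (k <= \dim {:L})%N -> v \in A -> w \in A -> rk v = maxrk A ->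
  (entry_rels v <= entry_rels w)%VS.
Proof.
move=> kL vA wA rkv; apply: contraT => /subvPn[x xKv xKw].
set K0 := (entry_rels v :&: entry_rels w)%VS.
have ltK0 : (\dim K0 < \dim (entry_rels v))%N.
  rewrite (ltn_leqif (dimv_leqif_sup (capvSl _ _))).
  by apply: contraNN xKw => /subvP/(_ x xKv); rewrite memv_cap => /andP[].
have pick (l : finvect_type L) :
    {y | y \in entry_rels (v + l *: w) & y \notin K0}.
  apply/sig2W/subvPn; apply: contraL ltK0 => /dimvS le_K0; rewrite -leqNgt.
  apply: leq_trans le_K0; rewrite !dim_entry_rels leq_sub2l // rkv.
  by rewrite rk_le_maxrk // rpredD // rpredZ.
have s_inj : injective (fun l => s2val (pick l)).
  move=> l1 l2 /= e; apply: (entry_rels_pencil (s2valP (pick l1))).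
    by rewrite e (s2valP (pick l2)).
  exact: s2valP' (pick l1).
have [l /= sl0] := injective_row_eq0 kL s_inj.
by move: (s2valP' (pick l)); rewrite sl0 mem0v.
Qed.

End MaxRank.

Section RationalHull.
Variables (F : finFieldType) (L : fieldExtType F) (k : nat).
Local Notation q := #|F|.
Implicit Types (v w : 'rV[L]_k).

Lemma entry_rels_sub_expand v w i0 : (entry_rels v <= entry_rels w)%VS ->
  w ord0 i0 = \sum_i coord (entry_tuple v) i (v ord0 i0) *: w ord0 i.
Proof.
set c := fun i => coord (entry_tuple v) i (v ord0 i0).
pose x := \row_i c i - delta_mx ord0 i0.
have v_expand : v ord0 i0 = \sum_i c i *: v ord0 i.
  have := mem_entry_span v i0; rewrite -span_entry_tuple => /coord_span {1}->.
  by apply: eq_bigr => i _; rewrite nth_entry_tuple.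
move=> /subvP/(_ x); rewrite !mem_entry_rels !linearB /= !entry_comb_delta.
by rewrite !entry_comb_row -v_expand subrr eqxx subr_eq0 => /(_ isT)/eqP.
Qed.

Definition coord_row v (j : 'I_(rk v)) : 'rV[L]_k :=
  \row_i (coord (vbasis (entry_span v)) j (v ord0 i))%:A.
Arguments coord_row : clear implicits.

Definition rational_hull v : {vspace 'rV[L]_k} :=
  <<[seq coord_row v j | j <- enum 'I_(rk v)]>>%VS.

Lemma dim_rational_hull v : (\dim (rational_hull v) <= rk v)%N.
Proof. by apply: leq_trans (dim_span _) _; rewrite size_map size_enum_ord. Qed.

Lemma mem_coord_row v (j : 'I_(rk v)) : coord_row v j \in rational_hull v.
Proof. by apply/memv_span/map_f; rewrite mem_enum. Qed.

Lemma mem_rational_hull v w :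
  (entry_rels v <= entry_rels w)%VS -> w \in rational_hull v.
Proof.
move=> sub_rels; set b := vbasis (entry_span v).
pose c y i := coord (entry_tuple v) i y.
pose psi (j : 'I_(rk v)) := \sum_i c b`_j i *: w ord0 i.
suff -> : w = \sum_j psi j *: coord_row v j.
  by apply: rpred_sum => j _; rewrite rpredZ ?mem_coord_row.
apply/rowP => i0; rewrite summxE (entry_rels_sub_expand i0 sub_rels).
under [RHS]eq_bigr => j _ do rewrite !mxE mulrC mulr_algl scaler_sumr.
rewrite exchange_big /=; apply: eq_bigr => i _.
under eq_bigr => j _ do rewrite scalerA.
rewrite -scaler_suml {1}(coord_vbasis (mem_entry_span v i0)) linear_sum /=.
by congr (_ *: _); apply: eq_bigr => j _; rewrite linearZ.
Qed.

Lemma frob_sum n (a : 'I_n -> L) (X : 'I_n -> 'rV[L]_k) :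
  frob (\sum_i a i *: X i) = \sum_i a i ^+ q *: frob (X i).
Proof.
apply/rowP => j; rewrite /frob mxE !summxE -[in LHS](expn1 q).
rewrite expr_card_pow_sum expn1; apply: eq_bigr => i _.
by rewrite !mxE exprMn.
Qed.

Lemma frob_coord_row v (j : 'I_(rk v)) : frob (coord_row v j) = coord_row v j.
Proof. by apply/rowP => i; rewrite !mxE exprZn expr1n expf_card. Qed.

Lemma frob_closed_rational_hull v : frob_closed (rational_hull v).
Proof.
move=> g; set X := [seq coord_row v j | j <- enum 'I_(rk v)].
rewrite [rational_hull v](_ : _ = <<in_tuple X>>%VS) // => /coord_span ->.
rewrite frob_sum; apply: rpred_sum => i _; apply: rpredZ.
have /mapP[j _ ->] : (in_tuple X)`_i \in X by apply: mem_nth.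
by rewrite frob_coord_row mem_coord_row.
Qed.

End RationalHull.

Section LinearizedPolynomial.
Variables (F : finFieldType) (L : fieldExtType F).
Local Notation q := #|F|.

Definition qpoly n (c : 'I_n -> L) : {poly L} := \sum_i c i *: 'X^(q ^ i).

Lemma horner_qpoly n (c : 'I_n -> L) y : (qpoly c).[y] = \sum_i c i * y ^+ (q ^ i).
Proof. by rewrite horner_sum; apply: eq_bigr => i _; rewrite hornerZ hornerXn. Qed.

Lemma coef_qpoly n (c : 'I_n -> L) m : (qpoly c)`_m = \sum_i c i * (m == q ^ i)%N%:R.
Proof. by rewrite coef_sum; apply: eq_bigr => i _; rewrite coefZ coefXn. Qed.

Lemma qpoly_neq0 n (c : 'I_n -> L) i0 : c i0 != 0 -> qpoly c != 0.
Proof.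
move=> ci0; apply: (contra_neq _ ci0) => c0; have := coef_qpoly c (q ^ i0).
rewrite c0 coef0 (bigD1 i0) //= eqxx mulr1 big1 ?addr0 // => j ji0.
by rewrite eqn_exp2l ?finNzRing_gt1 // (inj_eq val_inj) eq_sym (negbTE ji0) mulr0.
Qed.

Lemma size_qpoly n (c : 'I_n.+1 -> L) : (size (qpoly c) <= (q ^ n).+1)%N.
Proof.
apply/leq_sizeP => m lt_m; rewrite coef_qpoly big1 // => i _.
suff /negbTE-> : (m != q ^ i)%N by rewrite mulr0.
apply: (contraTneq _ lt_m) => ->.
by rewrite -leqNgt leq_exp2l ?finNzRing_gt1 // -ltnS.
Qed.

Lemma root_qpoly_span n (c : 'I_n -> L) m (X : m.-tuple L) :
  (forall i : 'I_m, root (qpoly c) X`_i) ->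
  forall y, y \in <<X>>%VS -> root (qpoly c) y.
Proof.
move=> rootX y /coord_span ->; apply/eqP; rewrite horner_qpoly.
under eq_bigr => i _ do rewrite expr_card_pow_lin mulr_sumr.
rewrite exchange_big big1 // => j _ /=.
under eq_bigr => i _ do rewrite -scalerAr.
by rewrite -scaler_sumr -horner_qpoly (eqP (rootX j)) scaler0.
Qed.

Lemma card_vspace_roots (P : {poly L}) (U : {vspace L}) :
  P != 0 -> {in U, forall y, root P y} -> (q ^ \dim U < size P)%N.
Proof.
move=> P_neq0 rootU; pose rs := enum [pred y : finvect_type L | y \in U].
have rootP : all (root P) rs.
  by apply/allP => y; rewrite (@mem_enum (finvect_type L)) inE => /rootU.
have size_rs : size rs = (q ^ \dim U)%N.
  by rewrite -cardE -(@card_vspace F (finvect_type L) (Vector.class L)).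
by rewrite -size_rs; apply: max_poly_roots P_neq0 rootP (enum_uniq _).
Qed.

End LinearizedPolynomial.

Section FrobeniusClosed.
Variables (F : finFieldType) (L : fieldExtType F) (k : nat).
Local Notation q := #|F|.
Implicit Types (V : {vspace 'rV[L]_k}) (w : 'rV[L]_k).

Definition frobn i w : 'rV[L]_k := map_mx (fun x => x ^+ (q ^ i)) w.

Lemma frobnS i w : frobn i.+1 w = frob (frobn i w).
Proof. by apply/rowP => j; rewrite /frob !mxE expnSr exprM. Qed.

Lemma frob_closed_frobn V w i : frob_closed V -> w \in V -> frobn i w \in V.
Proof.
move=> fV wV; elim: i => [|i IHi]; last by rewrite frobnS fV.
by rewrite (_ : frobn 0 w = w) //; apply/rowP => j; rewrite mxE expn0 expr1.
Qed.

Lemma frobn_dependent V w : frob_closed V -> w \in V ->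
  exists2 c : 'I_(\dim V).+1 -> L,
    \sum_i c i *: frobn i w = 0 & exists i, c i != 0.
Proof.
move=> fV wV; pose X := [tuple frobn i w | i < (\dim V).+1].
have not_free : ~~ free X.
  apply/negP => /eqP dimX; have : ((\dim V).+1 <= \dim V)%N; last by rewrite ltnn.
  rewrite -(size_tuple X) -dimX; apply/dimvS/span_subvP => _ /tnthP[i ->].
  by rewrite tnth_mktuple frob_closed_frobn.
apply: contrapT => no_rel; move/negP: not_free; apply; apply/freeP => c X_rel i.
apply: contrapT => ci; apply: no_rel; exists c; last by exists i; apply/eqP.
by rewrite -[RHS]X_rel; apply: eq_bigr => j _; rewrite -tnth_nth /X tnth_mktuple.
Qed.

Lemma rk_le_dim_frob_closed V w : frob_closed V -> w \in V -> (rk w <= \dim V)%N.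
Proof.
move=> fV wV; have [c c_rel [i0 ci0]] := frobn_dependent fV wV.
have root_entries (i : 'I_k) : root (qpoly c) (entry_tuple w)`_i.
  rewrite nth_entry_tuple; apply/eqP; rewrite horner_qpoly.
  have /rowP/(_ i) := c_rel; rewrite summxE mxE => c_rel_i.
  by rewrite -[RHS]c_rel_i; apply: eq_bigr => j _; rewrite !mxE.
have := card_vspace_roots (qpoly_neq0 ci0) (root_qpoly_span root_entries).
rewrite span_entry_tuple => lt_size.
rewrite -(leq_exp2l _ _ (finNzRing_gt1 F)) -ltnS.
exact: leq_trans lt_size (size_qpoly c).
Qed.

End FrobeniusClosed.

Section FrobeniusHull.
Variables (F : finFieldType) (L : fieldExtType F) (k : nat).
Hypothesis k_le_m : (k <= \dim {:L})%N.
Implicit Types A V : {vspace 'rV[L]_k}.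

Lemma exists_frob_closed_supv A :
  exists W, [/\ frob_closed W, (A <= W)%VS & (\dim W <= maxrk A)%N].
Proof.
have [v vA rkv] := maxrk_attained A.
exists (rational_hull v); split.
- exact: frob_closed_rational_hull.
- apply/subvP => w wA; apply: mem_rational_hull.
  exact: entry_rels_sub_maxrk k_le_m vA wA rkv.
- by rewrite -rkv dim_rational_hull.
Qed.

Lemma dimv_le_maxrk A : (\dim A <= maxrk A)%N.
Proof.
have [W [_ /dimvS le_AW le_W]] := exists_frob_closed_supv A.
exact: leq_trans le_AW le_W.
Qed.

Lemma frob_closed_in_AG V : frob_closed V -> in_AG V.
Proof.
move=> fV; apply/eqP; rewrite eqn_leq dimv_le_maxrk /=.
by have [v vV <-] := maxrk_attained V; apply: rk_le_dim_frob_closed.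
Qed.

End FrobeniusHull.

Lemma bigminn_leq (I : eqType) (r : seq I) (P : pred I) (f : I -> nat) d j :
  j \in r -> P j -> (\big[minn/d]_(i <- r | P i) f i <= f j)%N.
Proof.
elim: r => // a r IHr; rewrite inE big_cons => /predU1P[<- -> | jr Pj].
  exact: geq_minl.
by case: ifP => _; rewrite ?geq_min IHr ?orbT.
Qed.

Section MinUpto.
Variable k : nat.
Implicit Type P : nat -> Prop.

Lemma min_upto_le_bound P : (min_upto k P <= k)%N.
Proof.
apply: (big_ind (fun x => x <= k)%N) => // [x y le_xk _|i _].
  by rewrite geq_min le_xk.
by rewrite -ltnS.
Qed.

Lemma min_upto_le P i : (i <= k)%N -> P i -> (min_upto k P <= i)%N.
Proof.
move=> le_ik Pi.
apply: (@bigminn_leq _ _ _ (fun j : 'I_k.+1 => val j) k (Ordinal (le_ik : i < k.+1)%N)).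
  exact: mem_index_enum.
exact/asboolP.
Qed.

Lemma min_upto_mono P1 P2 :
  (forall j, (j <= k)%N -> P2 j -> exists2 i, (i <= j)%N & P1 i) ->
  (min_upto k P1 <= min_upto k P2)%N.
Proof.
move=> P2_P1; apply: (big_ind (fun x => min_upto k P1 <= x)%N).
- exact: min_upto_le_bound.
- by move=> x y le_x le_y; rewrite leq_min le_x.
move=> j /asboolP P2j; have le_jk : (j <= k)%N by rewrite -ltnS.
have [i le_ij P1i] := P2_P1 j le_jk P2j.
exact: leq_trans (min_upto_le (leq_trans le_ij le_jk) P1i) le_ij.
Qed.

End MinUpto.

Unset Implicit Arguments.

Theorem corollary3p13 (F : finFieldType) (L : fieldExtType F) (k t r : nat)
  (C : {vspace 'rV[L]_k}) :
  (1 <= k <= \dim {:L})%N ->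
  \dim C = t -> (1 <= t <= k)%N ->
  (1 <= r <= t)%N ->
  gen_rank_weight C r =
  min_upto k (fun i => exists A : {vspace 'rV[L]_k},
     [/\ in_AG A, (r <= \dim (A :&: C))%N & \dim A = i]).
Proof.
move=> /andP[_ k_le_m] _ _ _; rewrite /gen_rank_weight.
apply/eqP; rewrite eqn_leq; apply/andP; split; apply: min_upto_mono.
- move=> j _ [A [AG_A le_rA dimA]].
  have [W [fW le_AW le_W]] := exists_frob_closed_supv k_le_m A.
  exists (\dim W); first by rewrite -dimA AG_A.
  exists W; split => //; apply: leq_trans le_rA _.
  by apply/dimvS/capvS.
- move=> j _ [V [fV le_rV dimV]]; exists j => //.
  by exists V; split => //; apply: frob_closed_in_AG.
Qed.
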